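(* Let $0 < b < a \leq 1$. Then \[ (a-b)\left(\frac{1}{ab} + \frac{1}{b+1}\right) < \psi(a) - \psi(b) < (a-b)\left(\frac1{ab} + \frac{\pi^2}6\right). \] Further, if in addition $a, b > \frac12$, then \[ \psi(a) - \psi(b) < (a - b)\left(\frac1{ab} + \frac{\pi^2}{6} - \frac59\right). \]
   Context: $\psi=\Gamma'/\Gamma$ is the digamma function. *)

From Stdlib Require Import Reals.
From Coquelicot Require Import Coquelicot.
Open Scope R_scope.

Definition Gamma (x : R) : R :=
  RInt_gen (fun t => Rpower t (x - 1) * exp (- t))
           (at_right 0) (Rbar_locally p_infty).

Definition digamma (x : R) : R := Derive Gamma x / Gamma x.

From Stdlib Require Import Reals Lra Lia Classical.
From Coquelicot Require Import Coquelicot.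
Open Scope R_scope.

(* Differentiating the integral [Gamma x = int_0^oo t^(x-1) e^(-t) dt] under the
   integral sign (with an explicit second-order Taylor bound) shows that [Gamma] is
   differentiable; integration by parts gives [Gamma (x+1) = x Gamma x], hence
   [psi (x+1) = psi x + 1/x]; Cauchy-Schwarz makes [ln Gamma] midpoint convex, hence
   [psi] nondecreasing.  Therefore
     [psi a - psi b = sum_(k<N) (a-b)/((a+k)(b+k)) + r_N]  with  [0 <= r_N <= 1/(b+N)].
   The terms [k = 0, 1] are kept exactly; for [k >= 2] the term lies between
   [(a-b)(1/(b+k) - 1/(b+k+1))] and [(a-b)/k^2], and [sum_(k>=2) 1/k^2 <= PI^2/6 - 1]
   by Matsuoka's proof of [zeta 2 = PI^2/6].  Letting [N -> oo] gives
     [(a-b)(1/(ab) + q + 1/(2+b)) <= psi a - psi b <= (a-b)(1/(ab) + q + PI^2/6 - 1)]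
   with [q = 1/((1+a)(1+b))], and the theorem follows from
   [1/((1+b)(2+b)) < q < 1], and [q < 4/9] when [a, b > 1/2]. *)

Lemma exp_le_exp x y : x <= y -> exp x <= exp y.
Proof. intros [H | ->]; [left; apply exp_increasing, H | right; reflexivity]. Qed.

Lemma ln_le x y : 0 < x -> x <= y -> ln x <= ln y.
Proof. intros Hx [H | ->]; [left; apply ln_increasing; auto | right; reflexivity]. Qed.

Lemma exp_abs_le u : exp (Rabs u) <= exp u + exp (- u).
Proof.
  pose proof (exp_pos u); pose proof (exp_pos (- u)).
  destruct (Rle_dec 0 u); [rewrite Rabs_right | rewrite Rabs_left]; lra.
Qed.

Lemma abs_le_exp u : Rabs u <= exp u + exp (- u).
Proof. pose proof (exp_ineq1_le (Rabs u)); pose proof (exp_abs_le u); lra. Qed.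

Lemma sq_le_exp_abs u : u ^ 2 <= 4 * exp (Rabs u).
Proof.
  pose proof (exp_ineq1_le (Rabs u / 2)); pose proof (Rabs_pos u).
  replace (exp (Rabs u)) with (exp (Rabs u / 2) ^ 2)
    by (simpl; rewrite Rmult_1_r, <- exp_plus; f_equal; field).
  rewrite <- (pow2_abs u); nra.
Qed.

Lemma exp_sub_taylor1_le u : 0 <= exp u - 1 - u <= u ^ 2 * exp (Rabs u).
Proof.
  pose proof (exp_ineq1_le u) as H1; pose proof (exp_ineq1_le (- u)) as H2.
  assert (Hm : exp u * exp (- u) = 1) by (rewrite <- exp_plus, Rplus_opp_r; apply exp_0).
  pose proof (exp_pos u); pose proof (exp_pos (- u)).
  split; [lra |].
  destruct (Rle_dec 0 u).
  - rewrite Rabs_right by lra.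
    assert (exp u * (1 - u) <= 1) by nra.
    assert (exp u - 1 <= u * exp u) by nra.
    nra.
  - rewrite Rabs_left by lra.
    assert (exp u * (1 - u) <= 1) by nra.
    assert (1 <= exp (- u)) by (rewrite <- exp_0; apply exp_le_exp; lra).
    nra.
Qed.

Lemma continuous_of_ex_derive (f : R -> R) x :
  ex_derive f x -> @continuous R_UniformSpace R_UniformSpace f x.
Proof. apply (@ex_derive_continuous R_AbsRing R_NormedModule). Qed.

Lemma ex_RInt_of_continuous (f : R -> R) a b :
  (forall z, Rmin a b <= z <= Rmax a b -> @continuous R_UniformSpace R_UniformSpace f z) ->
  ex_RInt f a b.
Proof. apply (@ex_RInt_continuous R_CompleteNormedModule). Qed.

Lemma RInt_lincomb (f g : R -> R) a b c d : ex_RInt f a b -> ex_RInt g a b ->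
  RInt (fun x => c * f x - d * g x) a b = c * RInt f a b - d * RInt g a b.
Proof.
  intros Hf Hg; apply (@is_RInt_unique R_CompleteNormedModule).
  apply (@is_RInt_minus R_NormedModule _ _ _ _ (c * RInt f a b) (d * RInt g a b));
    apply (@is_RInt_scal R_NormedModule), (@RInt_correct R_CompleteNormedModule); assumption.
Qed.

Lemma is_derive_of_sq_bound (f : R -> R) x D K d : 0 < d ->
  (forall h, Rabs h <= d -> Rabs (f (x + h) - f x - h * D) <= h ^ 2 * K) -> is_derive f x D.
Proof.
  intros Hd Hf; apply is_derive_Reals; intros eps Heps.
  assert (Hdel : 0 < Rmin d (eps / (Rabs K + 1)))
    by (apply Rmin_glb_lt; [lra | apply Rdiv_lt_0_compat; [lra | pose proof (Rabs_pos K); lra]]).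
  exists (mkposreal _ Hdel); intros h Hh0 Hh; simpl in Hh.
  pose proof (Rmin_l d (eps / (Rabs K + 1))); pose proof (Rmin_r d (eps / (Rabs K + 1))).
  pose proof (Rabs_pos K); pose proof (Rabs_pos_lt h Hh0).
  assert (HhK : Rabs h * (Rabs K + 1) < eps).
  { assert (Hh' : Rabs h < eps / (Rabs K + 1)) by lra.
    apply (Rmult_lt_compat_r (Rabs K + 1)) in Hh'; [| lra].
    unfold Rdiv in Hh'; rewrite Rmult_assoc, Rinv_l, Rmult_1_r in Hh' by lra; exact Hh'. }
  replace ((f (x + h) - f x) / h - D) with ((f (x + h) - f x - h * D) / h) by (field; exact Hh0).
  rewrite Rabs_div by exact Hh0.
  apply (Rmult_lt_reg_r (Rabs h)); [lra |]; unfold Rdiv; rewrite Rmult_assoc, Rinv_l, Rmult_1_r by lra.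
  eapply Rle_lt_trans; [apply Hf; lra |].
  rewrite <- (pow2_abs h).
  pose proof (Rle_abs K); nra.
Qed.

Section MidpointConvex.

Variables (f : R -> R) (x : R).
Hypothesis f_midpoint_convex :
  forall z h, x <= z -> 0 < h -> f (z + h) - f z <= f (z + 2 * h) - f (z + h).

Lemma increment_le_shifted h k : 0 < h ->
  f (x + h) - f x <= f (x + INR (S k) * h) - f (x + INR k * h).
Proof.
  intro Hh; induction k as [|k IH].
  - simpl; rewrite Rmult_1_l, Rmult_0_l, Rplus_0_r; lra.
  - eapply Rle_trans; [exact IH |].
    pose proof (pos_INR k).
    replace (x + INR (S (S k)) * h) with (x + INR k * h + 2 * h) by (rewrite !S_INR; ring).
    replace (x + INR (S k) * h) with (x + INR k * h + h) by (rewrite S_INR; ring).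
    apply f_midpoint_convex; [nra | exact Hh].
Qed.

(* Chaining the hypothesis compares the difference quotients of step [(y - x) / n]
   at [x] and at [y]; let [n -> oo]. *)
Lemma derive_le_of_midpoint_convex y dx dy :
  x < y -> is_derive f x dx -> is_derive f y dy -> dx <= dy.
Proof.
  intros Hxy Hdx Hdy; apply Rnot_lt_le; intro Hlt.
  set (eps := (dx - dy) / 2); assert (He : 0 < eps) by (unfold eps; lra).
  destruct (proj1 (is_derive_Reals _ _ _) Hdx eps He) as [d1 Hd1].
  destruct (proj1 (is_derive_Reals _ _ _) Hdy eps He) as [d2 Hd2].
  assert (Hd : 0 < Rmin d1 d2) by (apply Rmin_glb_lt; apply cond_pos).
  destruct (archimed_cor1 (Rmin d1 d2 / (y - x))) as [n [Hn Hn0]]; [apply Rdiv_lt_0_compat; lra |].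
  pose proof (lt_0_INR n Hn0) as HnR.
  set (h := (y - x) / INR n); assert (Hh : 0 < h) by (apply Rdiv_lt_0_compat; lra).
  assert (Hhd : h < Rmin d1 d2).
  { unfold h; apply (Rmult_lt_compat_l (y - x)) in Hn; [| lra].
    replace ((y - x) * (Rmin d1 d2 / (y - x))) with (Rmin d1 d2) in Hn by (field; lra).
    unfold Rdiv; lra. }
  pose proof (Rmin_l d1 d2); pose proof (Rmin_r d1 d2).
  specialize (Hd1 h ltac:(lra) ltac:(rewrite Rabs_pos_eq; lra)).
  specialize (Hd2 h ltac:(lra) ltac:(rewrite Rabs_pos_eq; lra)).
  apply Rabs_lt_between' in Hd1; apply Rabs_lt_between' in Hd2.
  pose proof (increment_le_shifted h n Hh) as Hinc.
  replace (x + INR n * h) with y in Hinc by (unfold h; field; lra).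
  replace (x + INR (S n) * h) with (y + h) in Hinc by (unfold h; rewrite S_INR; field; lra).
  assert ((f (x + h) - f x) / h <= (f (y + h) - f y) / h)
    by (unfold Rdiv; apply Rmult_le_compat_r; [left; apply Rinv_0_lt_compat |]; lra).
  unfold eps in *; lra.
Qed.

End MidpointConvex.

(** * Euler's bound on [sum 1/k^2] *)

(* Matsuoka's proof of Euler's [zeta 2 = PI^2/6]: the ratio [Jcos m / Icos m]
   decreases by [1 / (2 (m+1)^2)] at each step and starts at [PI^2/12]. *)
Definition Icos (m : nat) : R := RInt (fun x => cos x ^ (2 * m)) 0 (PI / 2).
Definition Jcos (m : nat) : R := RInt (fun x => x ^ 2 * cos x ^ (2 * m)) 0 (PI / 2).

Lemma ex_RInt_Icos m : ex_RInt (fun x => cos x ^ (2 * m)) 0 (PI / 2).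
Proof. apply ex_RInt_of_continuous; intros; apply continuous_of_ex_derive; auto_derive; auto. Qed.

Lemma ex_RInt_Jcos m : ex_RInt (fun x => x ^ 2 * cos x ^ (2 * m)) 0 (PI / 2).
Proof. apply ex_RInt_of_continuous; intros; apply continuous_of_ex_derive; auto_derive; auto. Qed.

Lemma cos_pow_succ_twice m x : cos x ^ (2 * S m) = cos x ^ (2 * m) * cos x ^ 2.
Proof. rewrite <- pow_add; f_equal; lia. Qed.

Lemma Icos_succ m : 2 * INR (S m) * Icos (S m) = INR (2 * m + 1) * Icos m.
Proof.
  assert (H : is_RInt (fun x => 2 * INR (S m) * cos x ^ (2 * S m) - INR (2 * m + 1) * cos x ^ (2 * m))
                0 (PI / 2)
                (minus (sin (PI / 2) * cos (PI / 2) ^ (2 * m + 1)) (sin 0 * cos 0 ^ (2 * m + 1)))).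
  { apply (is_RInt_derive (fun x => sin x * cos x ^ (2 * m + 1))).
    - intros x _. auto_derive; auto.
      replace (Init.Nat.pred (m + (m + 0) + 1)) with (2 * m)%nat by lia.
      replace (m + (m + 0) + 1)%nat with (S (2 * m)) by lia.
      rewrite <- tech_pow_Rmult, cos_pow_succ_twice.
      repeat rewrite ?plus_INR, ?mult_INR, ?S_INR, ?INR_0.
      pose proof (sin2_cos2 x) as Hsc; unfold Rsqr in Hsc.
      apply Rminus_diag_uniq.
      transitivity (- (2 * INR m + 1) * cos x ^ (2 * m) * (sin x * sin x + cos x * cos x - 1));
        [ring | rewrite Hsc; ring].
    - intros y _; apply continuous_of_ex_derive; auto_derive; auto. }
  rewrite cos_PI2, sin_0, pow_i in H by lia.
  apply (@is_RInt_unique R_CompleteNormedModule) in H.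
  replace (minus _ _) with 0 in H by (unfold minus, plus, opp; simpl; ring).
  rewrite RInt_lincomb in H by apply ex_RInt_Icos.
  unfold Icos; lra.
Qed.

Lemma Jcos_succ m :
  Icos (S m) = INR (S m) * INR (2 * m + 1) * Jcos m - 2 * INR (S m) ^ 2 * Jcos (S m).
Proof.
  (* Hide [INR (S m)] from [auto_derive], which would unfold it. *)
  remember (INR (S m)) as k eqn:Hk.
  assert (H : is_RInt (fun x => 1 * cos x ^ (2 * S m)
                 - 1 * (k * INR (2 * m + 1) * (x ^ 2 * cos x ^ (2 * m))
                        - 2 * k ^ 2 * (x ^ 2 * cos x ^ (2 * S m)))) 0 (PI / 2)
     (minus (PI / 2 * cos (PI / 2) ^ (2 * m + 2)
               + k * (PI / 2) ^ 2 * sin (PI / 2) * cos (PI / 2) ^ (2 * m + 1))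
            (0 * cos 0 ^ (2 * m + 2) + k * 0 ^ 2 * sin 0 * cos 0 ^ (2 * m + 1)))).
  { apply (is_RInt_derive (fun x => x * cos x ^ (2 * m + 2) + k * x ^ 2 * sin x * cos x ^ (2 * m + 1))).
    - intros x _. auto_derive; auto.
      replace (Init.Nat.pred (m + (m + 0) + 2)) with (2 * m + 1)%nat by lia.
      replace (Init.Nat.pred (m + (m + 0) + 1)) with (2 * m)%nat by lia.
      replace (m + (m + 0) + 2)%nat with (2 * m + 2)%nat by lia.
      replace (m + (m + 0) + 1)%nat with (2 * m + 1)%nat by lia.
      replace (2 * S m)%nat with (2 * m + 2)%nat by lia.
      rewrite !pow_add, Hk, S_INR, !plus_INR, mult_INR.
      pose proof (sin2_cos2 x) as Hsc; unfold Rsqr in Hsc.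
      apply Rminus_diag_uniq.
      transitivity (- (2 * INR m + 1) * (INR m + 1) * x ^ 2 * cos x ^ (2 * m)
                      * (sin x * sin x + cos x * cos x - 1));
        [simpl; ring | rewrite Hsc; ring].
    - intros y _; apply continuous_of_ex_derive; auto_derive; auto. }
  rewrite cos_PI2, sin_0, !pow_i in H by lia.
  replace (minus _ _) with 0 in H by (unfold minus, plus, opp; simpl; ring).
  apply (@is_RInt_unique R_CompleteNormedModule) in H.
  rewrite RInt_lincomb in H; [| apply ex_RInt_Icos |].
  2:{ apply ex_RInt_of_continuous; intros; apply continuous_of_ex_derive; auto_derive; auto. }
  rewrite RInt_lincomb in H by apply ex_RInt_Jcos.
  unfold Icos, Jcos; lra.
Qed.

Lemma Icos_pos m : 0 < Icos m.
Proof.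
  induction m as [|m IH].
  - unfold Icos; simpl; rewrite RInt_const.
    unfold scal; simpl; unfold mult; simpl; pose proof PI_RGT_0; lra.
  - pose proof (Icos_succ m); pose proof (lt_0_INR (S m) ltac:(lia)).
    pose proof (lt_0_INR (2 * m + 1) ltac:(lia)).
    assert (0 < INR (2 * m + 1) * Icos m) by (apply Rmult_lt_0_compat; lra).
    nra.
Qed.

Lemma Jcos_nonneg m : 0 <= Jcos m.
Proof.
  apply RInt_ge_0; [pose proof PI_RGT_0; lra | apply ex_RInt_Jcos |].
  intros x _; apply Rmult_le_pos; [apply pow2_ge_0 |].
  rewrite pow_mult; apply pow_le, pow2_ge_0.
Qed.

Lemma Jcos_div_Icos_succ m : Jcos m / Icos m - Jcos (S m) / Icos (S m) = / (2 * INR (S m) ^ 2).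
Proof.
  pose proof (Icos_succ m); pose proof (Jcos_succ m).
  pose proof (Icos_pos m); pose proof (Icos_pos (S m)); pose proof (lt_0_INR (S m) ltac:(lia)).
  field_simplify_eq; [| lra].
  transitivity (INR (S m) * Jcos m * (INR (2 * m + 1) * Icos m)
                - 2 * INR (S m) ^ 2 * Icos m * Jcos (S m));
    [rewrite <- H; ring | rewrite H0; ring].
Qed.

Fixpoint sum_inv_sq (n : nat) : R :=
  match n with O => 0 | S k => sum_inv_sq k + / INR (S k) ^ 2 end.

Lemma sum_inv_sq_Jcos_div_Icos n : sum_inv_sq n = 2 * (Jcos 0 / Icos 0 - Jcos n / Icos n).
Proof.
  induction n as [|n IH]; [simpl; ring |].
  change (sum_inv_sq (S n)) with (sum_inv_sq n + / INR (S n) ^ 2); rewrite IH.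
  pose proof (Jcos_div_Icos_succ n); pose proof (lt_0_INR (S n) ltac:(lia)).
  replace (/ INR (S n) ^ 2) with (2 * / (2 * INR (S n) ^ 2)) by (field; lra).
  lra.
Qed.

Lemma Jcos_div_Icos_0 : Jcos 0 / Icos 0 = PI ^ 2 / 12.
Proof.
  assert (HI : Icos 0 = PI / 2 - 0).
  { apply (@is_RInt_unique R_CompleteNormedModule), (is_RInt_derive (fun x => x)).
    - intros; simpl; auto_derive; auto.
    - intros; apply continuous_of_ex_derive; simpl; auto_derive; auto. }
  assert (HJ : Jcos 0 = (PI / 2) ^ 3 / 3 - 0 ^ 3 / 3).
  { apply (@is_RInt_unique R_CompleteNormedModule), (is_RInt_derive (fun x => x ^ 3 / 3)).
    - intros; simpl; auto_derive; auto; field.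
    - intros; apply continuous_of_ex_derive; simpl; auto_derive; auto. }
  rewrite HI, HJ; pose proof PI_RGT_0; field; lra.
Qed.

Lemma sum_inv_sq_le n : sum_inv_sq n <= PI ^ 2 / 6.
Proof.
  rewrite sum_inv_sq_Jcos_div_Icos, Jcos_div_Icos_0.
  pose proof (Jcos_nonneg n); pose proof (Icos_pos n).
  assert (0 <= Jcos n / Icos n) by (apply Rdiv_le_0_compat; lra).
  lra.
Qed.

(** * Improper integrals on [(0, +oo)] *)

Local Notation is_RInt_0_oo f l := (is_RInt_gen f (at_right 0) (Rbar_locally p_infty) l).

Definition continuous_pos (f : R -> R) : Prop :=
  forall t, 0 < t -> @continuous R_UniformSpace R_UniformSpace f t.

Definition bounded_RInt_pos (f : R -> R) : Prop :=
  exists M, forall u v, 0 < u -> u <= v -> RInt f u v <= M.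

Lemma ex_RInt_pos f u v : continuous_pos f -> 0 < u -> u <= v -> ex_RInt f u v.
Proof.
  intros Hf Hu Huv; apply ex_RInt_of_continuous; intros z Hz; apply Hf.
  rewrite Rmin_left in Hz by lra; lra.
Qed.

Lemma continuous_pos_plus f g :
  continuous_pos f -> continuous_pos g -> continuous_pos (fun t => f t + g t).
Proof. intros Hf Hg t Ht; apply (@continuous_plus R_UniformSpace R_AbsRing R_NormedModule); auto. Qed.

Lemma continuous_pos_scal c f : continuous_pos f -> continuous_pos (fun t => c * f t).
Proof. intros Hf t Ht; apply (@continuous_scal_r R_UniformSpace R_AbsRing R_NormedModule); auto. Qed.

Lemma RInt_le_widen f u u0 v0 v : continuous_pos f -> (forall t, 0 < t -> 0 <= f t) ->
  0 < u -> u <= u0 -> u0 <= v0 -> v0 <= v -> RInt f u0 v0 <= RInt f u v.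
Proof.
  intros Hf Hp Hu H1 H2 H3.
  rewrite <- (RInt_Chasles f u u0 v), <- (RInt_Chasles f u0 v0 v) by (apply ex_RInt_pos; auto; lra).
  assert (0 <= RInt f u u0)
    by (apply RInt_ge_0; [lra | apply ex_RInt_pos; auto | intros; apply Hp; lra]).
  assert (0 <= RInt f v0 v)
    by (apply RInt_ge_0; [lra | apply ex_RInt_pos; auto; lra | intros; apply Hp; lra]).
  unfold plus; simpl; lra.
Qed.

Lemma eventually_0_oo c d :
  0 < c -> filter_prod (at_right 0) (Rbar_locally p_infty) (fun ab => 0 < fst ab < c /\ d < snd ab).
Proof.
  intro Hc; apply (Filter_prod _ _ _ (fun u => 0 < u < c) (fun v => d < v)).
  - exists (mkposreal c Hc); intros y Hy Hy0; split; auto.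
    apply Rabs_lt_between' in Hy; simpl in Hy; lra.
  - exists d; auto.
  - intros u v Hu Hv; simpl; auto.
Qed.

(* The improper integral is the supremum of the partial integrals. *)
Lemma is_RInt_0_oo_of_bounded f :
  continuous_pos f -> (forall t, 0 < t -> 0 <= f t) -> bounded_RInt_pos f ->
  exists l, is_RInt_0_oo f l /\ forall u v, 0 < u -> u <= v -> RInt f u v <= l.
Proof.
  intros Hf Hp [M HM].
  set (E := fun y => exists u v, 0 < u /\ u <= v /\ y = RInt f u v).
  destruct (completeness E) as [S [HS1 HS2]].
  { exists M; intros y [u [v [Hu [Huv ->]]]]; auto. }
  { exists (RInt f 1 1), 1, 1; repeat split; lra. }
  assert (Hub : forall u v, 0 < u -> u <= v -> RInt f u v <= S)
    by (intros u v Hu Huv; apply HS1; exists u, v; auto).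
  exists S; split; auto.
  apply filterlimi_locally; intros eps.
  destruct (classic (exists u0 v0, 0 < u0 /\ u0 <= v0 /\ S - eps < RInt f u0 v0))
    as [[u0 [v0 [Hu0 [Huv0 Hlt]]]] | Hn].
  - eapply filter_imp; [| apply (eventually_0_oo u0 v0 Hu0)].
    intros [u v] [[Hu1 Hu2] Hv]; simpl in *.
    exists (RInt f u v); split.
    + apply (@RInt_correct R_CompleteNormedModule), ex_RInt_pos; auto; lra.
    + pose proof (Hub u v Hu1 ltac:(lra)).
      pose proof (RInt_le_widen f u u0 v0 v Hf Hp Hu1 ltac:(lra) Huv0 ltac:(lra)).
      change (Rabs (RInt f u v - S) < eps); apply Rabs_def1; lra.
  - assert (S <= S - eps); [| pose proof (cond_pos eps); lra].
    apply HS2; intros y [u [v [Hu [Huv ->]]]].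
    apply Rnot_lt_le; intro; apply Hn; exists u, v; auto.
Qed.

Lemma bounded_RInt_pos_le f g : continuous_pos f -> continuous_pos g ->
  (forall t, 0 < t -> f t <= g t) -> bounded_RInt_pos g -> bounded_RInt_pos f.
Proof.
  intros Hf Hg Hfg [M HM]; exists M; intros u v Hu Huv.
  eapply Rle_trans; [| apply (HM u v Hu Huv)].
  apply RInt_le; auto; try (apply ex_RInt_pos; auto).
  intros; apply Hfg; lra.
Qed.

Lemma bounded_RInt_pos_plus f g : continuous_pos f -> continuous_pos g ->
  bounded_RInt_pos f -> bounded_RInt_pos g -> bounded_RInt_pos (fun t => f t + g t).
Proof.
  intros Hf Hg [M HM] [N HN]; exists (M + N); intros u v Hu Huv.
  rewrite (RInt_plus f g) by (apply ex_RInt_pos; auto).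
  pose proof (HM u v Hu Huv); pose proof (HN u v Hu Huv).
  unfold plus; simpl; lra.
Qed.

Lemma bounded_RInt_pos_scal c f : 0 <= c -> continuous_pos f ->
  bounded_RInt_pos f -> bounded_RInt_pos (fun t => c * f t).
Proof.
  intros Hc Hf [M HM]; exists (c * M); intros u v Hu Huv.
  rewrite (RInt_scal f) by (apply ex_RInt_pos; auto).
  apply Rmult_le_compat_l; auto.
Qed.

Lemma is_RInt_0_oo_ext (f g : R -> R) (l : R) :
  (forall t, f t = g t) -> is_RInt_0_oo f l -> is_RInt_0_oo g l.
Proof. intros H; apply is_RInt_gen_ext, filter_forall; intros; apply H. Qed.

Lemma is_RInt_0_oo_nonneg (g : R -> R) (l : R) :
  (forall t, 0 < t -> 0 <= g t) -> is_RInt_0_oo g l -> 0 <= l.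
Proof.
  intros Hg Hl.
  assert (H0 := @is_RInt_gen_scal R_NormedModule _ _ _ _ g 0 l Hl).
  assert (Habs : norm (scal 0 l) <= l).
  { apply (@RInt_gen_norm R_CompleteNormedModule (at_right 0) (Rbar_locally p_infty) _ _
             (fun y => scal 0 (g y)) g _ l); auto.
    - eapply filter_imp; [| apply (eventually_0_oo 1 1 Rlt_0_1)].
      intros [u v] [[Hu Hu1] Hv]; simpl in *; lra.
    - eapply filter_imp; [| apply (eventually_0_oo 1 1 Rlt_0_1)].
      intros [u v] [[Hu _] Hv] t Ht; simpl in *; unfold scal, norm; simpl; unfold mult, abs; simpl.
      rewrite Rmult_0_l, Rabs_R0; apply Hg; lra. }
  unfold scal, norm in Habs; simpl in Habs; unfold mult, abs in Habs; simpl in Habs.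
  rewrite Rmult_0_l, Rabs_R0 in Habs; exact Habs.
Qed.

Lemma is_RInt_0_oo_of_primitive (g F : R -> R) :
  (forall u v, 0 < u -> u <= v -> is_RInt g u v (F v - F u)) ->
  (forall eps, 0 < eps -> exists del, 0 < del /\ forall t, 0 < t < del -> Rabs (F t) < eps) ->
  (forall eps, 0 < eps -> exists M, forall t, M < t -> Rabs (F t) < eps) ->
  is_RInt_0_oo g 0.
Proof.
  intros HI H0 Hoo; apply filterlimi_locally; intros eps.
  pose proof (cond_pos eps) as Heps.
  destruct (H0 (eps / 2)) as [del [Hdel Hd]]; [lra |].
  destruct (Hoo (eps / 2)) as [M HM]; [lra |].
  assert (Hm : 0 < Rmin del 1) by (apply Rmin_glb_lt; lra).
  pose proof (Rmin_l del 1); pose proof (Rmin_r del 1).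
  pose proof (Rmax_l M 1); pose proof (Rmax_r M 1).
  eapply filter_imp; [| apply (eventually_0_oo _ (Rmax M 1) Hm)].
  intros [u v] [[Hu1 Hu2] Hv]; simpl in *.
  exists (F v - F u); split; [apply HI; lra |].
  pose proof (Hd u ltac:(lra)); pose proof (HM v ltac:(lra)).
  change (Rabs (F v - F u - 0) < eps).
  replace (F v - F u - 0) with (F v + - F u) by ring.
  eapply Rle_lt_trans; [apply Rabs_triang |]; rewrite Rabs_Ropp; lra.
Qed.

Lemma is_RInt_0_oo_of_dominated f g : continuous_pos f -> continuous_pos g ->
  (forall t, 0 < t -> Rabs (f t) <= g t) -> bounded_RInt_pos g -> exists l, is_RInt_0_oo f l.
Proof.
  intros Hf Hg Hfg Hb.
  assert (Hg0 : forall t, 0 < t -> 0 <= g t)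
    by (intros t Ht; pose proof (Rabs_pos (f t)); pose proof (Hfg t Ht); lra).
  assert (Hfg' : forall t, 0 < t -> 0 <= f t + g t <= 2 * g t)
    by (intros t Ht; pose proof (Hfg t Ht) as H; apply Rabs_le_between in H; lra).
  destruct (is_RInt_0_oo_of_bounded (fun t => f t + g t)) as [l1 [Hl1 _]].
  { apply continuous_pos_plus; auto. }
  { intros; apply Hfg'; auto. }
  { apply (bounded_RInt_pos_le _ (fun t => 2 * g t)); auto using continuous_pos_plus, continuous_pos_scal.
    - intros; apply Hfg'; auto.
    - apply bounded_RInt_pos_scal; auto; lra. }
  destruct (is_RInt_0_oo_of_bounded g Hg Hg0 Hb) as [lg [Hlg _]].
  exists (l1 - lg).
  apply (is_RInt_0_oo_ext (fun t => minus (f t + g t) (g t)));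
    [intros; unfold minus, plus, opp; simpl; ring |].
  exact (@is_RInt_gen_minus R_NormedModule _ _ _ _ _ _ l1 lg Hl1 Hlg).
Qed.

(** * The Gamma function *)

Definition Gamma_integrand (x t : R) : R := Rpower t (x - 1) * exp (- t).

Lemma Gamma_integrand_pos x t : 0 < Gamma_integrand x t.
Proof. apply Rmult_lt_0_compat; apply exp_pos. Qed.

Lemma continuous_pos_Gamma_integrand x : continuous_pos (Gamma_integrand x).
Proof.
  intros t Ht; apply continuous_of_ex_derive; unfold Gamma_integrand, Rpower; auto_derive; auto.
Qed.

Lemma Gamma_integrand_shift x c t :
  0 < t -> Gamma_integrand (x + c) t = exp (c * ln t) * Gamma_integrand x t.
Proof.
  intro Ht; unfold Gamma_integrand, Rpower.
  replace ((x + c - 1) * ln t) with (c * ln t + (x - 1) * ln t) by ring.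
  rewrite exp_plus; ring.
Qed.

Lemma Gamma_integrand_le_Rpower x t : 0 < t -> Gamma_integrand x t <= Rpower t (x - 1).
Proof.
  intro Ht; unfold Gamma_integrand.
  rewrite <- (Rmult_1_r (Rpower t (x - 1))) at 2.
  apply Rmult_le_compat_l; [left; apply exp_pos |].
  rewrite <- exp_0; apply exp_le_exp; lra.
Qed.

(* From [ln s <= s - 1] at [s = t / (2k)] with [k = max x 1]. *)
Lemma Gamma_integrand_le_exp x :
  exists C, 0 < C /\ forall t, 1 <= t -> Gamma_integrand x t <= C * exp (- t / 2).
Proof.
  set (k := Rmax x 1).
  assert (Hk1 : 1 <= k) by apply Rmax_r; assert (Hxk : x <= k) by apply Rmax_l.
  exists (exp (k * ln (2 * k))); split; [apply exp_pos |]; intros t Ht.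
  unfold Gamma_integrand, Rpower; rewrite <- !exp_plus; apply exp_le_exp.
  assert (Hl : 0 <= ln t) by (rewrite <- ln_1; apply ln_le; lra).
  assert (Hs : ln (t / (2 * k)) <= t / (2 * k) - 1).
  { pose proof (exp_ineq1_le (ln (t / (2 * k)))) as He.
    rewrite exp_ln in He by (apply Rdiv_lt_0_compat; lra); lra. }
  rewrite ln_div in Hs by lra.
  assert (k * (ln t - ln (2 * k)) <= k * (t / (2 * k) - 1)) by (apply Rmult_le_compat_l; lra).
  replace (k * (t / (2 * k) - 1)) with (t / 2 - k) in H by (field; lra).
  assert ((x - 1) * ln t <= k * ln t) by (apply Rmult_le_compat_r; lra).
  lra.
Qed.

Lemma RInt_Gamma_integrand_le_inv x u : 0 < x -> 0 < u <= 1 -> RInt (Gamma_integrand x) u 1 <= / x.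
Proof.
  intros Hx Hu.
  assert (Hprim : is_RInt (fun t => Rpower t (x - 1)) u 1 (Rpower 1 x / x - Rpower u x / x)).
  { apply (is_RInt_derive (fun t => Rpower t x / x)); intros t Ht; rewrite Rmin_left in Ht by lra.
    - unfold Rpower; auto_derive; [lra |].
      replace ((x - 1) * ln t) with (x * ln t + - ln t) by ring.
      rewrite exp_plus, exp_Ropp, exp_ln by lra; field; lra.
    - apply continuous_of_ex_derive; unfold Rpower; auto_derive; lra. }
  eapply Rle_trans.
  - apply RInt_le; [lra | | |].
    + apply ex_RInt_pos; [apply continuous_pos_Gamma_integrand | lra | lra].
    + eexists; exact Hprim.
    + intros; apply Gamma_integrand_le_Rpower; lra.
  - rewrite (is_RInt_unique _ _ _ _ Hprim).
    unfold Rpower; rewrite ln_1, Rmult_0_r, exp_0.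
    assert (0 <= exp (x * ln u) / x) by (apply Rdiv_le_0_compat; [left; apply exp_pos | lra]).
    unfold Rdiv in *; lra.
Qed.

Lemma RInt_Gamma_integrand_le_exp x C v : 0 <= C ->
  (forall t, 1 <= t -> Gamma_integrand x t <= C * exp (- t / 2)) -> 1 <= v ->
  RInt (Gamma_integrand x) 1 v <= 2 * C.
Proof.
  intros HC0 HC Hv.
  assert (Hprim : is_RInt (fun t => C * exp (- t / 2)) 1 v
                    (-2 * C * exp (- v / 2) - -2 * C * exp (- 1 / 2))).
  { apply (is_RInt_derive (fun t => -2 * C * exp (- t / 2))); intros t Ht.
    - auto_derive; auto; unfold Rdiv; field.
    - apply continuous_of_ex_derive; auto_derive; auto. }
  eapply Rle_trans.
  - apply RInt_le; [lra | | |].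
    + apply ex_RInt_pos; [apply continuous_pos_Gamma_integrand | lra | lra].
    + eexists; exact Hprim.
    + intros; apply HC; lra.
  - rewrite (is_RInt_unique _ _ _ _ Hprim).
    assert (exp (- 1 / 2) <= 1) by (rewrite <- exp_0; apply exp_le_exp; lra).
    pose proof (exp_pos (- v / 2)); nra.
Qed.

Lemma bounded_RInt_Gamma_integrand x : 0 < x -> bounded_RInt_pos (Gamma_integrand x).
Proof.
  intro Hx; destruct (Gamma_integrand_le_exp x) as [C [HC0 HC]].
  exists (/ x + 2 * C); intros u v Hu Huv.
  pose proof (Rmin_l u 1); pose proof (Rmin_r u 1); pose proof (Rmax_l v 1); pose proof (Rmax_r v 1).
  assert (Hu' : 0 < Rmin u 1) by (apply Rmin_glb_lt; lra).
  eapply Rle_trans.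
  - apply (RInt_le_widen _ (Rmin u 1) u v (Rmax v 1)); auto; try lra.
    + apply continuous_pos_Gamma_integrand.
    + intros; left; apply Gamma_integrand_pos.
  - rewrite <- (RInt_Chasles _ (Rmin u 1) 1 (Rmax v 1))
      by (apply ex_RInt_pos; [apply continuous_pos_Gamma_integrand | lra | lra]).
    pose proof (RInt_Gamma_integrand_le_inv x (Rmin u 1) Hx ltac:(lra)).
    pose proof (RInt_Gamma_integrand_le_exp x C (Rmax v 1) ltac:(lra) HC ltac:(lra)).
    unfold plus; simpl; lra.
Qed.

Lemma Gamma_unique x l : is_RInt_0_oo (Gamma_integrand x) l -> Gamma x = l.
Proof. apply (@is_RInt_gen_unique R_CompleteNormedModule (at_right 0) (Rbar_locally p_infty) _ _). Qed.

Lemma is_RInt_Gamma x : 0 < x -> is_RInt_0_oo (Gamma_integrand x) (Gamma x).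
Proof.
  intro Hx.
  destruct (is_RInt_0_oo_of_bounded (Gamma_integrand x)) as [l [Hl _]].
  - apply continuous_pos_Gamma_integrand.
  - intros; left; apply Gamma_integrand_pos.
  - apply bounded_RInt_Gamma_integrand, Hx.
  - rewrite (Gamma_unique x l Hl); exact Hl.
Qed.

Lemma Gamma_pos x : 0 < x -> 0 < Gamma x.
Proof.
  intro Hx.
  destruct (is_RInt_0_oo_of_bounded (Gamma_integrand x)) as [l [Hl Hle]].
  - apply continuous_pos_Gamma_integrand.
  - intros; left; apply Gamma_integrand_pos.
  - apply bounded_RInt_Gamma_integrand, Hx.
  - rewrite (Gamma_unique x l Hl).
    eapply Rlt_le_trans; [| apply (Hle 1 2); lra].
    apply RInt_gt_0; [lra | intros; apply Gamma_integrand_pos |].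
    intros; apply continuous_pos_Gamma_integrand; lra.
Qed.

Lemma Gamma_integrand_succ_vanishes_at_0 x : 0 < x ->
  forall eps, 0 < eps ->
  exists del, 0 < del /\ forall t, 0 < t < del -> Gamma_integrand (x + 1) t < eps.
Proof.
  intros Hx eps Heps; exists (exp (ln eps / x)); split; [apply exp_pos |]; intros t [Ht1 Ht2].
  assert (Hl : x * ln t < ln eps).
  { assert (Hlt : ln t < ln eps / x) by (rewrite <- (ln_exp (ln eps / x)); apply ln_increasing; lra).
    apply (Rmult_lt_compat_l x) in Hlt; [| exact Hx].
    replace (x * (ln eps / x)) with (ln eps) in Hlt by (field; lra); exact Hlt. }
  apply exp_increasing in Hl; rewrite exp_ln in Hl by exact Heps.
  assert (exp (- t) <= 1) by (rewrite <- exp_0; apply exp_le_exp; lra).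
  pose proof (exp_pos (x * ln t)).
  unfold Gamma_integrand, Rpower; replace (x + 1 - 1) with x by ring; nra.
Qed.

Lemma Gamma_integrand_vanishes_at_oo x :
  forall eps, 0 < eps -> exists M, forall t, M < t -> Gamma_integrand x t < eps.
Proof.
  intros eps Heps; destruct (Gamma_integrand_le_exp x) as [C [HC0 HC]].
  exists (Rmax 1 (- 2 * ln (eps / C))); intros t Ht.
  pose proof (Rmax_l 1 (- 2 * ln (eps / C))); pose proof (Rmax_r 1 (- 2 * ln (eps / C))).
  eapply Rle_lt_trans; [apply HC; lra |].
  assert (Hexp : exp (- t / 2) < eps / C).
  { rewrite <- (exp_ln (eps / C)) by (apply Rdiv_lt_0_compat; auto).
    apply exp_increasing; lra. }
  apply (Rmult_lt_compat_l C) in Hexp; [| exact HC0].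
  replace (C * (eps / C)) with eps in Hexp by (field; lra); exact Hexp.
Qed.

Lemma Gamma_succ x : 0 < x -> Gamma (x + 1) = x * Gamma x.
Proof.
  intro Hx.
  set (F := fun t => - Gamma_integrand (x + 1) t).
  assert (HF : forall t, Rabs (F t) = Gamma_integrand (x + 1) t)
    by (intro t; unfold F; rewrite Rabs_Ropp, Rabs_pos_eq;
        [| left; apply Gamma_integrand_pos]; reflexivity).
  assert (H0 : is_RInt_0_oo (fun t => Gamma_integrand (x + 1) t - x * Gamma_integrand x t) 0).
  { apply (is_RInt_0_oo_of_primitive _ F).
    - intros u v Hu Huv; apply (is_RInt_derive F); intros t Ht; rewrite Rmin_left in Ht by lra.
      + unfold F, Gamma_integrand, Rpower; auto_derive; [lra |].
        replace (x + 1 - 1) with x by ring.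
        replace ((x - 1) * ln t) with (x * ln t + - ln t) by ring.
        rewrite exp_plus, (exp_Ropp (ln t)), exp_ln by lra; field; lra.
      + apply continuous_of_ex_derive; unfold Gamma_integrand, Rpower; auto_derive; lra.
    - intros eps Heps; destruct (Gamma_integrand_succ_vanishes_at_0 x Hx eps Heps) as [del [Hdel H]].
      exists del; split; [exact Hdel |]; intros t Ht; rewrite HF; auto.
    - intros eps Heps; destruct (Gamma_integrand_vanishes_at_oo (x + 1) eps Heps) as [M H].
      exists M; intros t Ht; rewrite HF; auto. }
  assert (H1 : is_RInt_0_oo (fun t => Gamma_integrand (x + 1) t - x * Gamma_integrand x t)
                            (Gamma (x + 1) - x * Gamma x)).
  { apply (is_RInt_0_oo_ext (fun t => minus (Gamma_integrand (x + 1) t) (scal x (Gamma_integrand x t))));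
      [reflexivity |].
    apply (@is_RInt_gen_minus R_NormedModule); try apply _; [apply is_RInt_Gamma; lra |].
    apply (@is_RInt_gen_scal R_NormedModule); try apply _; apply is_RInt_Gamma, Hx. }
  apply (@is_RInt_gen_unique R_CompleteNormedModule (at_right 0) (Rbar_locally p_infty) _ _) in H0, H1.
  rewrite H0 in H1; lra.
Qed.

(* Cauchy-Schwarz: with [p_x = Gamma_integrand x], [p_s - 2 l p_m + l^2 p_t >= 0]
   pointwise since [p_m^2 = p_s p_t]. *)
Lemma Gamma_midpoint_sq_le s t : 0 < s -> 0 < t -> Gamma ((s + t) / 2) ^ 2 <= Gamma s * Gamma t.
Proof.
  intros Hs Ht; set (m := (s + t) / 2); assert (Hm : 0 < m) by (unfold m; lra).
  set (l := Gamma m / Gamma t).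
  assert (Hq : is_RInt_0_oo
      (fun u => Gamma_integrand s u - (2 * l) * Gamma_integrand m u + l ^ 2 * Gamma_integrand t u)
      (Gamma s - (2 * l) * Gamma m + l ^ 2 * Gamma t)).
  { apply (is_RInt_0_oo_ext (fun u => plus (minus (Gamma_integrand s u)
                                                  (scal (2 * l) (Gamma_integrand m u)))
                                           (scal (l ^ 2) (Gamma_integrand t u)))); [reflexivity |].
    apply (@is_RInt_gen_plus R_NormedModule); try apply _.
    - apply (@is_RInt_gen_minus R_NormedModule); try apply _; [apply is_RInt_Gamma; lra |].
      apply (@is_RInt_gen_scal R_NormedModule); try apply _; apply is_RInt_Gamma; lra.
    - apply (@is_RInt_gen_scal R_NormedModule); try apply _; apply is_RInt_Gamma; lra. }
  apply is_RInt_0_oo_nonneg in Hq.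
  - pose proof (Gamma_pos t Ht).
    cut (0 <= Gamma s * Gamma t - Gamma m ^ 2); [lra |].
    replace (Gamma s * Gamma t - Gamma m ^ 2)
      with (Gamma t * (Gamma s - 2 * l * Gamma m + l ^ 2 * Gamma t)) by (unfold l; field; lra).
    apply Rmult_le_pos; lra.
  - intros u Hu.
    assert (E : Gamma_integrand m u ^ 2 = Gamma_integrand s u * Gamma_integrand t u).
    { unfold Gamma_integrand, Rpower; simpl; rewrite Rmult_1_r, <- !exp_plus.
      f_equal; unfold m; field. }
    pose proof (Gamma_integrand_pos s u); pose proof (Gamma_integrand_pos t u).
    set (ps := Gamma_integrand s u) in *; set (pm := Gamma_integrand m u) in *.
    set (pt := Gamma_integrand t u) in *.
    apply (Rmult_le_reg_l ps); [lra |].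
    replace (ps * (ps - 2 * l * pm + l ^ 2 * pt))
      with ((ps - l * pm) ^ 2 + l ^ 2 * (ps * pt - pm ^ 2)) by ring.
    rewrite E; pose proof (pow2_ge_0 (ps - l * pm)); lra.
Qed.

Lemma abs_ln_Gamma_integrand_le x e t : 0 < e -> 0 < t ->
  Rabs (ln t) * Gamma_integrand x t <= / e * (Gamma_integrand (x + e) t + Gamma_integrand (x - e) t).
Proof.
  intros He Ht; unfold Rminus; rewrite !Gamma_integrand_shift by exact Ht.
  pose proof (abs_le_exp (e * ln t)) as H; rewrite Rabs_mult, Rabs_pos_eq in H by lra.
  pose proof (Gamma_integrand_pos x t).
  replace (- e * ln t) with (- (e * ln t)) by ring.
  apply (Rmult_le_reg_l e); [exact He |].
  replace (e * (/ e * (exp (e * ln t) * Gamma_integrand x t + exp (- (e * ln t)) * Gamma_integrand x t)))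
    with ((exp (e * ln t) + exp (- (e * ln t))) * Gamma_integrand x t) by (field; lra).
  rewrite <- Rmult_assoc; apply Rmult_le_compat_r; lra.
Qed.

Lemma Gamma_integrand_taylor_le x d h t : 0 < d -> Rabs h <= d -> 0 < t ->
  0 <= Gamma_integrand (x + h) t - Gamma_integrand x t - h * (ln t * Gamma_integrand x t)
    <= h ^ 2 * (4 / d ^ 2 * (Gamma_integrand (x + 2 * d) t + Gamma_integrand (x - 2 * d) t)).
Proof.
  intros Hd Hh Ht; replace (x - 2 * d) with (x + - (2 * d)) by ring.
  rewrite !Gamma_integrand_shift by exact Ht.
  pose proof (Gamma_integrand_pos x t) as Hg; set (s := ln t) in *; set (g := Gamma_integrand x t) in *.
  replace (exp (h * s) * g - g - h * (s * g)) with ((exp (h * s) - 1 - h * s) * g) by ring.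
  destruct (exp_sub_taylor1_le (h * s)) as [R0 R1].
  split; [apply Rmult_le_pos; lra |].
  assert (Hexp : exp (Rabs (h * s)) <= exp (d * Rabs s)).
  { apply exp_le_exp; rewrite Rabs_mult; apply Rmult_le_compat_r; [apply Rabs_pos | exact Hh]. }
  assert (Hsq : d ^ 2 * s ^ 2 <= 4 * exp (d * Rabs s)).
  { pose proof (sq_le_exp_abs (d * s)); rewrite Rabs_mult, Rabs_pos_eq in H by lra.
    replace (d ^ 2 * s ^ 2) with ((d * s) ^ 2) by ring; exact H. }
  assert (H2 : exp (d * Rabs s) * exp (d * Rabs s) <= exp (2 * d * s) + exp (- (2 * d) * s)).
  { rewrite <- exp_plus; replace (d * Rabs s + d * Rabs s) with (Rabs (2 * d * s))
      by (rewrite !Rabs_mult, (Rabs_pos_eq d), (Rabs_pos_eq 2) by lra; ring).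
    replace (- (2 * d) * s) with (- (2 * d * s)) by ring; apply exp_abs_le. }
  pose proof (exp_pos (d * Rabs s)); pose proof (exp_pos (Rabs (h * s))).
  assert (Hh2 : 0 <= h ^ 2) by apply pow2_ge_0.
  apply Rle_trans with (h ^ 2 * s ^ 2 * exp (d * Rabs s) * g).
  - apply Rmult_le_compat_r; [lra |].
    replace ((h * s) ^ 2) with (h ^ 2 * s ^ 2) in R1 by ring.
    pose proof (pow2_ge_0 s); nra.
  - replace (h ^ 2 * (4 / d ^ 2 * (exp (2 * d * s) * g + exp (- (2 * d) * s) * g)))
      with (h ^ 2 / d ^ 2 * (4 * (exp (2 * d * s) + exp (- (2 * d) * s))) * g) by (field; lra).
    apply Rmult_le_compat_r; [lra |].
    replace (h ^ 2 * s ^ 2 * exp (d * Rabs s)) with (h ^ 2 / d ^ 2 * (d ^ 2 * s ^ 2 * exp (d * Rabs s)))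
      by (field; lra).
    apply Rmult_le_compat_l; [apply Rdiv_le_0_compat; [lra | apply pow_lt; lra] |].
    nra.
Qed.

Lemma ex_RInt_0_oo_ln_Gamma_integrand x :
  0 < x -> exists D, is_RInt_0_oo (fun t => ln t * Gamma_integrand x t) D.
Proof.
  intro Hx; set (e := x / 2).
  apply (is_RInt_0_oo_of_dominated _ (fun t => / e * (Gamma_integrand (x + e) t + Gamma_integrand (x - e) t))).
  - intros t Ht; apply continuous_of_ex_derive; unfold Gamma_integrand, Rpower; auto_derive; lra.
  - apply continuous_pos_scal, continuous_pos_plus; apply continuous_pos_Gamma_integrand.
  - intros t Ht; rewrite Rabs_mult, (Rabs_pos_eq (Gamma_integrand x t)) by (left; apply Gamma_integrand_pos).
    apply abs_ln_Gamma_integrand_le; unfold e; lra.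
  - apply bounded_RInt_pos_scal; [left; apply Rinv_0_lt_compat; unfold e; lra | |].
    + apply continuous_pos_plus; apply continuous_pos_Gamma_integrand.
    + apply bounded_RInt_pos_plus; try apply continuous_pos_Gamma_integrand;
        apply bounded_RInt_Gamma_integrand; unfold e; lra.
Qed.

(* Integrate [Gamma_integrand_taylor_le] with [d = x / 4], so that [x - 2 d > 0]. *)
Lemma Gamma_taylor_le x : 0 < x -> exists D K, forall h, Rabs h <= x / 4 ->
  Rabs (Gamma (x + h) - Gamma x - h * D) <= h ^ 2 * K.
Proof.
  intro Hx; set (d := x / 4); assert (Hd : 0 < d) by (unfold d; lra).
  destruct (ex_RInt_0_oo_ln_Gamma_integrand x Hx) as [D HD].
  exists D, (4 / d ^ 2 * (Gamma (x + 2 * d) + Gamma (x - 2 * d))); intros h Hh.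
  assert (Hxh : 0 < x + h) by (apply Rabs_le_between in Hh; unfold d in Hh; lra).
  assert (Hrem : is_RInt_0_oo
      (fun t => Gamma_integrand (x + h) t - Gamma_integrand x t - h * (ln t * Gamma_integrand x t))
      (Gamma (x + h) - Gamma x - h * D)).
  { apply (is_RInt_0_oo_ext (fun t => minus (minus (Gamma_integrand (x + h) t) (Gamma_integrand x t))
                                            (scal h (ln t * Gamma_integrand x t)))); [reflexivity |].
    apply (@is_RInt_gen_minus R_NormedModule); try apply _.
    - apply (@is_RInt_gen_minus R_NormedModule); try apply _; apply is_RInt_Gamma; lra.
    - apply (@is_RInt_gen_scal R_NormedModule); try apply _; exact HD. }
  assert (Hdom : is_RInt_0_oo
      (fun t => h ^ 2 * (4 / d ^ 2 * (Gamma_integrand (x + 2 * d) t + Gamma_integrand (x - 2 * d) t)))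
      (h ^ 2 * (4 / d ^ 2 * (Gamma (x + 2 * d) + Gamma (x - 2 * d))))).
  { apply (@is_RInt_gen_scal R_NormedModule); try apply _.
    apply (@is_RInt_gen_scal R_NormedModule); try apply _.
    apply (@is_RInt_gen_plus R_NormedModule); try apply _; apply is_RInt_Gamma; unfold d; lra. }
  refine (@RInt_gen_norm R_CompleteNormedModule (at_right 0) (Rbar_locally p_infty) _ _
            _ _ _ _ _ _ Hrem Hdom).
  - eapply filter_imp; [| apply (eventually_0_oo 1 1 Rlt_0_1)].
    intros [u v] [[Hu Hu1] Hv]; simpl in *; lra.
  - eapply filter_imp; [| apply (eventually_0_oo 1 1 Rlt_0_1)].
    intros [u v] [[Hu Hu1] Hv] t Ht; simpl in *.
    destruct (Gamma_integrand_taylor_le x d h t Hd Hh ltac:(lra)).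
    change (Rabs (Gamma_integrand (x + h) t - Gamma_integrand x t - h * (ln t * Gamma_integrand x t))
            <= h ^ 2 * (4 / d ^ 2 * (Gamma_integrand (x + 2 * d) t + Gamma_integrand (x - 2 * d) t))).
    rewrite Rabs_pos_eq; lra.
Qed.

Lemma ex_derive_Gamma x : 0 < x -> ex_derive Gamma x.
Proof.
  intro Hx; destruct (Gamma_taylor_le x Hx) as [D [K HDK]].
  exists D; apply (is_derive_of_sq_bound _ _ _ K (x / 4)); [lra | exact HDK].
Qed.

(** * The digamma function *)

Lemma is_derive_Gamma x : 0 < x -> is_derive Gamma x (Derive Gamma x).
Proof. intro Hx; apply (@Derive_correct Gamma), ex_derive_Gamma, Hx. Qed.

Lemma digamma_succ x : 0 < x -> digamma (x + 1) = digamma x + / x.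
Proof.
  intro Hx.
  assert (H1 : is_derive (fun y => Gamma (y + 1)) x (Derive Gamma (x + 1))).
  { auto_derive; [apply ex_derive_Gamma; lra | apply Rmult_1_l]. }
  assert (H2 : is_derive (fun y => Gamma (y + 1)) x (Gamma x + x * Derive Gamma x)).
  { apply (is_derive_ext_loc (fun y => y * Gamma y)).
    - exists (mkposreal x Hx); intros y Hy; apply Rabs_lt_between' in Hy; simpl in Hy.
      symmetry; apply Gamma_succ; lra.
    - auto_derive; [apply ex_derive_Gamma; lra |].
      change (Derive (fun y => Gamma y)) with (Derive Gamma); ring. }
  unfold digamma; rewrite <- (is_derive_unique _ _ _ H1), (is_derive_unique _ _ _ H2).
  rewrite Gamma_succ by exact Hx.
  pose proof (Gamma_pos x Hx); field; lra.
Qed.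

Lemma is_derive_ln_Gamma x : 0 < x -> is_derive (fun z => ln (Gamma z)) x (digamma x).
Proof.
  intro Hx; pose proof (Gamma_pos x Hx).
  pose proof (is_derive_comp ln Gamma x _ _ (is_derive_ln _ H) (is_derive_Gamma x Hx)) as E.
  unfold scal in E; simpl in E; unfold mult in E; simpl in E.
  unfold digamma, Rdiv; exact E.
Qed.

Lemma ln_Gamma_midpoint_convex z h : 0 < z -> 0 < h ->
  ln (Gamma (z + h)) - ln (Gamma z) <= ln (Gamma (z + 2 * h)) - ln (Gamma (z + h)).
Proof.
  intros Hz Hh; pose proof (Gamma_midpoint_sq_le z (z + 2 * h) Hz ltac:(lra)) as H.
  replace ((z + (z + 2 * h)) / 2) with (z + h) in H by field.
  pose proof (Gamma_pos z Hz); pose proof (Gamma_pos (z + h) ltac:(lra)).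
  pose proof (Gamma_pos (z + 2 * h) ltac:(lra)).
  apply ln_le in H; [| apply pow_lt; lra].
  rewrite ln_pow, ln_mult in H by lra; simpl in H; lra.
Qed.

Lemma digamma_le x y : 0 < x -> x <= y -> digamma x <= digamma y.
Proof.
  intros Hx [Hxy | <-]; [| lra].
  apply (derive_le_of_midpoint_convex (fun z => ln (Gamma z)) x) with (y := y); auto.
  - intros z h Hz Hh; apply ln_Gamma_midpoint_convex; lra.
  - apply is_derive_ln_Gamma, Hx.
  - apply is_derive_ln_Gamma; lra.
Qed.

Lemma digamma_sub_bounds x y : 0 < x -> x <= y <= x + 1 -> 0 <= digamma y - digamma x <= / x.
Proof.
  intros Hx Hy; pose proof (digamma_le x y Hx (proj1 Hy)).
  pose proof (digamma_le y (x + 1) ltac:(lra) (proj2 Hy)); rewrite digamma_succ in H0 by exact Hx.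
  lra.
Qed.

Fixpoint shifted_harmonic (a : R) (N : nat) : R :=
  match N with O => 0 | S k => shifted_harmonic a k + / (a + INR k) end.

Lemma digamma_add_nat a N : 0 < a -> digamma (a + INR N) = digamma a + shifted_harmonic a N.
Proof.
  intro Ha; induction N as [|N IH]; [simpl; rewrite Rplus_0_r; ring |].
  pose proof (pos_INR N).
  rewrite S_INR, <- Rplus_assoc, digamma_succ, IH by lra; simpl; ring.
Qed.

Lemma eventually_inv_add_nat_lt b eps :
  0 <= b -> 0 < eps -> exists N, forall n, (N <= n)%nat -> / (b + INR n) < eps.
Proof.
  intros Hb He; destruct (archimed_cor1 eps He) as [N [HN HN0]]; exists N; intros n Hn.
  pose proof (lt_0_INR N HN0); pose proof (le_INR N n Hn).
  apply Rle_lt_trans with (/ INR N); [apply Rinv_le_contravar; lra | exact HN].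
Qed.

Definition harmonic_gap (a b : R) (N : nat) : R := shifted_harmonic b N - shifted_harmonic a N.

Section DigammaDifference.

Variables a b : R.
Hypotheses (b_pos : 0 < b) (b_le_a : b <= a) (a_le : a <= b + 1).

Lemma harmonic_gap_succ N :
  harmonic_gap a b (S N) = harmonic_gap a b N + (a - b) / ((a + INR N) * (b + INR N)).
Proof. unfold harmonic_gap; simpl; pose proof (pos_INR N); field; lra. Qed.

(* The terms with [k >= 2] are compared with the telescoping [1/(b+k) - 1/(b+k+1)]. *)
Lemma harmonic_gap_ge N : harmonic_gap a b (N + 2) >=
  (a - b) * (/ (a * b) + / ((1 + a) * (1 + b)) + / (2 + b) - / (b + INR (N + 2))).
Proof.
  induction N as [|N IH].
  - unfold harmonic_gap; simpl; right; field; lra.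
  - replace (S N + 2)%nat with (S (N + 2)) by lia; rewrite harmonic_gap_succ, S_INR.
    set (n := INR (N + 2)) in *; assert (0 <= n) by apply pos_INR.
    assert (/ ((b + n) * (b + n + 1)) <= / ((a + n) * (b + n)))
      by (apply Rinv_le_contravar; nra).
    assert ((a - b) * / ((b + n) * (b + n + 1)) <= (a - b) * / ((a + n) * (b + n)))
      by (apply Rmult_le_compat_l; lra).
    replace (/ (b + (n + 1))) with (/ (b + n) - / ((b + n) * (b + n + 1))) by (field; lra).
    unfold Rdiv; lra.
Qed.

(* The terms with [k >= 2] are compared with [1/k^2]. *)
Lemma harmonic_gap_le N : harmonic_gap a b (N + 2) <=
  (a - b) * (/ (a * b) + / ((1 + a) * (1 + b)) + sum_inv_sq (N + 1) - 1).
Proof.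
  induction N as [|N IH].
  - unfold harmonic_gap; simpl; right; field; lra.
  - replace (S N + 2)%nat with (S (N + 2)) by lia; rewrite harmonic_gap_succ.
    replace (S N + 1)%nat with (S (N + 1)) by lia.
    change (sum_inv_sq (S (N + 1))) with (sum_inv_sq (N + 1) + / INR (S (N + 1)) ^ 2).
    replace (S (N + 1)) with (N + 2)%nat by lia.
    set (n := INR (N + 2)) in *.
    assert (2 <= n) by (unfold n; rewrite plus_INR; simpl; pose proof (pos_INR N); lra).
    assert (/ ((a + n) * (b + n)) <= / n ^ 2) by (apply Rinv_le_contravar; [nra | simpl; nra]).
    assert ((a - b) * / ((a + n) * (b + n)) <= (a - b) * / n ^ 2)
      by (apply Rmult_le_compat_l; lra).
    unfold Rdiv; lra.
Qed.

Lemma digamma_sub_split N : digamma a - digamma b =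
  (digamma (a + INR N) - digamma (b + INR N)) + harmonic_gap a b N.
Proof. unfold harmonic_gap; rewrite !digamma_add_nat by lra; ring. Qed.

Lemma digamma_sub_ge :
  (a - b) * (/ (a * b) + / ((1 + a) * (1 + b)) + / (2 + b)) <= digamma a - digamma b.
Proof.
  apply Rle_plus_epsilon; intros eps Heps.
  destruct (eventually_inv_add_nat_lt b eps ltac:(lra) Heps) as [N HN].
  pose proof (HN (N + 2)%nat ltac:(lia)); pose proof (pos_INR (N + 2)).
  pose proof (Rinv_0_lt_compat (b + INR (N + 2)) ltac:(lra)).
  rewrite (digamma_sub_split (N + 2)).
  pose proof (digamma_sub_bounds (b + INR (N + 2)) (a + INR (N + 2)) ltac:(lra) ltac:(lra)).
  pose proof (harmonic_gap_ge N).
  nra.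
Qed.

Lemma digamma_sub_le :
  digamma a - digamma b <= (a - b) * (/ (a * b) + / ((1 + a) * (1 + b)) + PI ^ 2 / 6 - 1).
Proof.
  apply Rle_plus_epsilon; intros eps Heps.
  destruct (eventually_inv_add_nat_lt b eps ltac:(lra) Heps) as [N HN].
  pose proof (HN (N + 2)%nat ltac:(lia)); pose proof (pos_INR (N + 2)).
  rewrite (digamma_sub_split (N + 2)).
  pose proof (digamma_sub_bounds (b + INR (N + 2)) (a + INR (N + 2)) ltac:(lra) ltac:(lra)).
  pose proof (harmonic_gap_le N); pose proof (sum_inv_sq_le (N + 1)).
  nra.
Qed.

End DigammaDifference.

Theorem lemma5p2 (a b : R) (hb : 0 < b) (hba : b < a) (ha : a <= 1) :
  ((a - b) * (1 / (a * b) + 1 / (b + 1)) < digamma a - digamma b /\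
   digamma a - digamma b < (a - b) * (1 / (a * b) + PI ^ 2 / 6)) /\
  (1 / 2 < a -> 1 / 2 < b ->
   digamma a - digamma b < (a - b) * (1 / (a * b) + PI ^ 2 / 6 - 5 / 9)).
Proof.
  pose proof (digamma_sub_ge a b hb ltac:(lra) ltac:(lra)) as Hge.
  pose proof (digamma_sub_le a b hb ltac:(lra) ltac:(lra)) as Hle.
  unfold Rdiv; rewrite !Rmult_1_l.
  set (q := / ((1 + a) * (1 + b))) in *.
  assert (Hlt : forall u v, u < v -> (a - b) * u < (a - b) * v)
    by (intros; apply Rmult_lt_compat_l; lra).
  split; [split |].
  - assert (Hq : / (b + 1) < q + / (2 + b)).
    { replace (/ (b + 1)) with (/ ((1 + b) * (2 + b)) + / (2 + b)) by (field; lra).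
      apply Rplus_lt_compat_r, Rinv_lt_contravar; [repeat apply Rmult_lt_0_compat |]; nra. }
    specialize (Hlt _ _ (Rplus_lt_compat_l (/ (a * b)) _ _ Hq)); lra.
  - assert (Hq : q < 1) by (unfold q; rewrite <- Rinv_1; apply Rinv_lt_contravar; nra).
    specialize (Hlt (/ (a * b) + q + PI ^ 2 * / 6 - 1) (/ (a * b) + PI ^ 2 * / 6) ltac:(lra)); lra.
  - intros Ha2 Hb2.
    assert (Hq : q < 4 * / 9)
      by (unfold q; replace (4 * / 9) with (/ (9 / 4)) by field; apply Rinv_lt_contravar; nra).
    specialize (Hlt (/ (a * b) + q + PI ^ 2 * / 6 - 1) (/ (a * b) + PI ^ 2 * / 6 - 5 * / 9)
                    ltac:(lra)); lra.
Qed.
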